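(* Let $W\subset\mathbb{P}^n_{\mathbb{F}_p}$ be a subvariety over $\mathbb{F}_p$, and let $\widetilde{W}=\mathbb{P}^n|_W$. Then the endomorphism $Fr$ of the $p$-adic superspace $\mathbb{P}^n$ given by a choice of homogeneous coordinates, $(r_0:\dots:r_n)\mapsto(r_0^p:\dots:r_n^p)$ (a lifting of the Frobenius of $\mathbb{P}^n_{\mathbb{F}_p}$), restricts to an endomorphism of $\widetilde{W}$.
   Context: Throughout, $p$ is an odd prime, $\mathbb{F}_p=\mathbb{Z}_p/p$. Let $\Lambda$ be the category of supercommutative rings $\Lambda_B=B[\xi_1,\dots,\xi_m]$ ($m\ge0$, odd anticommuting generators) over finitely generated commutative rings $B$ with $p$ nilpotent and $B/pB$ reduced, with parity-preserving homomorphisms; $\Lambda_B^+$ is the ideal generated by the $\xi_i$. The $p$-adic superspace $\mathbb{P}^n:\Lambda\to Sets$ is $\mathbb{P}^n(\Lambda_B)=\{(r_0,\dots,r_n)\in(\Lambda_B^0)^{n+1}:\sum\Lambda_Br_i=\Lambda_B\}/(\Lambda_B^0)^\times$, with body $\mathbb{P}^n_{\mathbb{F}_p}$. For a subvariety $Z$ of the body, $\mathbb{P}^n|_Z(\Lambda_B)$ is the preimage of $Z(B/pB)$ under $\mathbb{P}^n(\Lambda_B)\to\mathbb{P}^n(B/pB)$ induced by $\Lambda_B\to\Lambda_B/(pB+\Lambda_B^+)=B/pB$. *)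

From HB Require Import structures.
From mathcomp Require Import all_boot all_order all_algebra.
From mathcomp Require Import mpoly.
Set Implicit Arguments. Unset Strict Implicit. Unset Printing Implicit Defensive.
Import GRing.Theory.
Local Open Scope ring_scope.

(* The supercommutative ring  Lambda_B = B[xi_1,...,xi_m]  (Grassmann       *)
(* algebra over B on m odd generators).  An element is represented by its   *)
(* coefficients on the basis monomials xi_S = xi_{i1} ... xi_{ik}           *)
(* (i1 < ... < ik, S = {i1,...,ik}).                                        *)
Definition superring (B : comPzRingType) (m : nat) := {ffun {set 'I_m} -> B}.

Section Super.
Variables (B : comPzRingType) (m : nat).
Local Notation L := (superring B m).

(* sign of xi_S1 * xi_S2 = sgn * xi_(S1 u S2) for disjoint S1, S2:
   (-1)^(number of pairs i in S1, j in S2 with j < i) *)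
Definition super_sign (S1 S2 : {set 'I_m}) : B :=
  (-1) ^+ #|[set ij : 'I_m * 'I_m | (ij.1 \in S1) && (ij.2 \in S2) && (ij.2 < ij.1)%N]|.

Definition super_zero : L := [ffun _ => 0].
Definition super_one : L := [ffun S => if S == set0 then 1 else 0].
Definition super_add (a b : L) : L := [ffun S => a S + b S].
Definition super_mul (a b : L) : L :=
  [ffun S => \sum_(S1 : {set 'I_m}) \sum_(S2 : {set 'I_m} |
        (S1 :&: S2 == set0) && (S1 :|: S2 == S))
        super_sign S1 S2 * a S1 * b S2].
Definition super_sum (k : nat) (F : 'I_k -> L) : L :=
  [ffun S => \sum_(i < k) F i S].
Definition super_exp (a : L) (e : nat) : L := iter e (super_mul a) super_one.

Definition super_even (a : L) : Prop := forall S : {set 'I_m}, odd #|S| -> a S = 0.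

Definition even_unit (u : L) : Prop :=
  super_even u /\ exists v : L, super_even v /\ super_mul u v = super_one.

Definition unimodular (n : nat) (r : 'I_n.+1 -> L) : Prop :=
  (forall i, super_even (r i)) /\
  exists a : 'I_n.+1 -> L, super_sum (fun i => super_mul (a i) (r i)) = super_one.

(* body map Lambda_B -> Lambda_B/(pB + Lambda_B^+) = B/pB is:
   take the coefficient of xi_emptyset, then reduce mod p. *)
Definition body (a : L) : B := a set0.
End Super.

Definition finitely_generated_ring (B : comPzRingType) : Prop :=
  exists s : seq B, forall b : B, forall S : {pred B},
    subring_closed S -> {subset s <= S} -> b \in S.

Definition in_pB (p : nat) (B : comPzRingType) (x : B) : Prop :=
  exists y : B, x = p%:R * y.

Definition p_nilpotent (p : nat) (B : comPzRingType) : Prop :=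
  exists k : nat, (p%:R : B) ^+ k = 0.

Definition mod_p_reduced (p : nat) (B : comPzRingType) : Prop :=
  forall (x : B) (k : nat), in_pB p (x ^+ k.+1) -> in_pB p x.

(* Subvarieties W of P^n_{F_p}: W = V(f_1,...,f_k) with f_j homogeneous in  *)
(* F_p[X_0..X_n].  For x in B^{n+1} (representing a point of P^n(B/pB) via *)
(* reduction mod p), "x mod p lies in W" means f_j(x mod p) = 0 in B/pB,    *)
(* i.e. f_j evaluated at x (with F_p coefficients lifted to 0..p-1) lies in *)
(* pB -- independent of the lift.                                           *)
Definition evalFp (p : nat) (B : comPzRingType) (n : nat)
    (f : {mpoly 'F_p[n]}) (x : 'I_n -> B) : B :=
  \sum_(mo <- msupp f) ((nat_of_ord (f@_mo) : nat)%:R * \prod_(i < n) x i ^+ mo i).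

Definition homogeneous_system (p n : nat) (fs : seq {mpoly 'F_p[n]}) : Prop :=
  forall f, f \in fs -> exists d : nat, f \is d.-homog.

Definition body_in_W (p : nat) (B : comPzRingType) (n : nat)
    (fs : seq {mpoly 'F_p[n.+1]}) (x : 'I_n.+1 -> B) : Prop :=
  forall f, f \in fs -> in_pB p (evalFp f x).

(* the superspace P^n restricted to W, on representatives *)
Definition in_Wtilde (p : nat) (B : comPzRingType) (m n : nat)
    (fs : seq {mpoly 'F_p[n.+1]}) (r : 'I_n.+1 -> superring B m) : Prop :=
  unimodular r /\ body_in_W fs (fun i => body (r i)).

Definition Fr (p : nat) (B : comPzRingType) (m n : nat)
    (r : 'I_n.+1 -> superring B m) : 'I_n.+1 -> superring B m :=
  fun i => super_exp (r i) p.

(* Multiplying the basis monomials of the Grassmann algebra costs the sign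
   (-1)^(number of inversions), which is additive in each argument; this makes
   the product associative and the even part central. Hence Fr, the p-th power
   map on coordinates, commutes with rescaling by even units, and it preserves
   the unit ideal: if central elements s_i generate 1, so do the s_i^p, by
   replacing one generator at a time. On bodies Fr is the p-th power map, and
   f(x^p) = f(x)^p mod p for f with coefficients in F_p (binomial coefficients
   and Fermat), so the equations of W remain satisfied. *)

From HB Require Import structures.
From mathcomp Require Import all_boot all_order all_algebra.
From mathcomp Require Import mpoly ring.
From Stdlib Require Import FunctionalExtensionality.
Set Implicit Arguments. Unset Strict Implicit. Unset Printing Implicit Defensive.
Import GRing.Theory.
Local Open Scope ring_scope.

Section Inversions.
Variable m : nat.
Implicit Types X Y Z : {set 'I_m}.

Definition inversions X Y : nat := \sum_(i in X) \sum_(j in Y) (j < i)%N.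

Lemma super_signE (B : comPzRingType) X Y :
  super_sign B X Y = (-1) ^+ inversions X Y.
Proof.
rewrite /super_sign /inversions; congr (_ ^+ _).
rewrite -sum1dep_card pair_big_dep /= big_mkcondr /=.
by apply: eq_bigr => ij _; case: ifP.
Qed.

Lemma inversions0l Y : inversions set0 Y = 0%N.
Proof. by rewrite /inversions big_set0. Qed.

Lemma inversions0r X : inversions X set0 = 0%N.
Proof. by rewrite /inversions big1 // => i _; rewrite big_set0. Qed.

Lemma sum_setU (F : 'I_m -> nat) X Y : [disjoint X & Y] ->
  \sum_(i in X :|: Y) F i = (\sum_(i in X) F i + \sum_(i in Y) F i)%N.
Proof. by move=> dXY; rewrite -bigU //; apply: eq_bigl => i; rewrite inE. Qed.

Lemma inversionsUl X Y Z : [disjoint X & Y] ->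
  inversions (X :|: Y) Z = (inversions X Z + inversions Y Z)%N.
Proof. exact: sum_setU. Qed.

Lemma inversionsUr X Y Z : [disjoint Y & Z] ->
  inversions X (Y :|: Z) = (inversions X Y + inversions X Z)%N.
Proof.
by move=> dYZ; rewrite /inversions -big_split; apply: eq_bigr => i _; apply: sum_setU.
Qed.

Lemma inversionsC X Y : [disjoint X & Y] ->
  (inversions X Y + inversions Y X)%N = (#|X| * #|Y|)%N.
Proof.
move=> dXY; rewrite /inversions [X in (_ + X)%N](exchange_big_dep (mem X)) //=.
rewrite -big_split /=.
rewrite -sum_nat_const; apply: eq_bigr => i Xi.
under [X in (_ + X)%N]eq_bigl => j do rewrite Xi andbT.
rewrite -big_split /= -sum1_card.
apply: eq_bigr => j Yj.
have : i != j by apply: contraTneq Yj => <-; rewrite (disjointFr dXY).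
by rewrite neq_ltn; case: ltngtP.
Qed.
End Inversions.

Lemma disjointUl_set (T : finType) (A B C : {set T}) :
  [disjoint A :|: B & C] = [disjoint A & C] && [disjoint B & C].
Proof. by rewrite -!setI_eq0 setIUl setU_eq0. Qed.

Lemma disjointUr_set (T : finType) (A B C : {set T}) :
  [disjoint A & B :|: C] = [disjoint A & B] && [disjoint A & C].
Proof. by rewrite -!setI_eq0 setIUr setU_eq0. Qed.

Section GrassmannRing.
Variables (B : comPzRingType) (m : nat).
Local Notation L := (superring B m).
Local Notation T := {set 'I_m}.
Implicit Types a b c : L.

Lemma super_mulE a b S : super_mul a b S =
  \sum_(S1 : T) \sum_(S2 : T) (if [disjoint S1 & S2] && (S1 :|: S2 == S)
     then (-1) ^+ inversions S1 S2 * a S1 * b S2 else 0).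
Proof.
rewrite ffunE; apply: eq_bigr => S1 _; rewrite big_mkcond.
by apply: eq_bigr => S2 _; rewrite setI_eq0 super_signE.
Qed.

Lemma sum_over_union (H : T -> T -> T -> B) :
  \sum_(U : T) \sum_(S1 : T) \sum_(S2 : T)
     (if [disjoint S1 & S2] && (S1 :|: S2 == U) then H U S1 S2 else 0) =
  \sum_(S1 : T) \sum_(S2 : T) (if [disjoint S1 & S2] then H (S1 :|: S2) S1 S2 else 0).
Proof.
rewrite exchange_big; apply: eq_bigr => S1 _; rewrite exchange_big.
apply: eq_bigr => S2 _; case: ifP => [d12|_]; last by rewrite big1 // => U; case: ifP.
by rewrite -big_mkcond /=; under eq_bigl do rewrite eq_sym; rewrite big_pred1_eq.
Qed.

Definition super_mul3 a b c S : B :=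
  \sum_(S1 : T) \sum_(S2 : T) \sum_(S3 : T)
    (if [&& [disjoint S1 & S2], [disjoint S1 & S3], [disjoint S2 & S3]
          & S1 :|: S2 :|: S3 == S]
     then (-1) ^+ (inversions S1 S2 + inversions S1 S3 + inversions S2 S3)
            * a S1 * b S2 * c S3
     else 0).

Lemma super_mul3El a b c S : super_mul (super_mul a b) c S = super_mul3 a b c S.
Proof.
rewrite super_mulE exchange_big /= /super_mul3.
under [RHS]eq_bigr do rewrite exchange_big; rewrite [RHS]exchange_big /=.
apply: eq_bigr => S3 _.
pose H (U S1 S2 : T) := if [disjoint U & S3] && (U :|: S3 == S)
  then (-1) ^+ (inversions U S3 + inversions S1 S2) * a S1 * b S2 * c S3 else 0.
transitivity (\sum_(U : T) \sum_(S1 : T) \sum_(S2 : T)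
  (if [disjoint S1 & S2] && (S1 :|: S2 == U) then H U S1 S2 else 0)).
  apply: eq_bigr => U _; rewrite /H; case: ifP => _; last first.
    by rewrite big1 // => S1 _; rewrite big1 // => S2 _; case: ifP.
  rewrite super_mulE mulr_sumr mulr_suml; apply: eq_bigr => S1 _.
  rewrite mulr_sumr mulr_suml; apply: eq_bigr => S2 _.
  by case: ifP; rewrite ?mulr0 ?mul0r // exprD !mulrA [_ * (-1) ^+ _]mulrC.
rewrite sum_over_union; apply: eq_bigr => S1 _; apply: eq_bigr => S2 _.
rewrite /H disjointUl_set.
case d12: [disjoint S1 & S2] => //=; rewrite -andbA.
by rewrite inversionsUl // addnC addnA.
Qed.

Lemma super_mul3Er a b c S : super_mul a (super_mul b c) S = super_mul3 a b c S.
Proof.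
rewrite super_mulE; apply: eq_bigr => S1 _.
pose H (V S2 S3 : T) := if [disjoint S1 & V] && (S1 :|: V == S)
  then (-1) ^+ (inversions S1 V + inversions S2 S3) * a S1 * b S2 * c S3 else 0.
transitivity (\sum_(V : T) \sum_(S2 : T) \sum_(S3 : T)
  (if [disjoint S2 & S3] && (S2 :|: S3 == V) then H V S2 S3 else 0)).
  apply: eq_bigr => V _; rewrite /H; case: ifP => _; last first.
    by rewrite big1 // => S2 _; rewrite big1 // => S3 _; case: ifP.
  rewrite super_mulE mulr_sumr; apply: eq_bigr => S2 _.
  rewrite mulr_sumr; apply: eq_bigr => S3 _.
  by case: ifP; rewrite ?mulr0 // exprD -!mulrA [a S1 * _]mulrCA.
rewrite sum_over_union; apply: eq_bigr => S2 _; apply: eq_bigr => S3 _.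
rewrite /H disjointUr_set setUA.
case d23: [disjoint S2 & S3]; rewrite ?andbF //= -andbA.
by rewrite inversionsUr.
Qed.

Lemma super_mulA a b c : super_mul (super_mul a b) c = super_mul a (super_mul b c).
Proof. by apply/ffunP => S; rewrite super_mul3El super_mul3Er. Qed.

Lemma super_mul1r a : super_mul (super_one B m) a = a.
Proof.
apply/ffunP => S; rewrite super_mulE (bigD1 set0) //=.
rewrite [X in _ + X]big1 ?addr0 => [|S1 /negbTE S1n0].
  rewrite -big_mkcond /=.
  under eq_bigl do rewrite -setI_eq0 set0I eqxx set0U.
  by rewrite big_pred1_eq inversions0l ffunE eqxx !mul1r.
by rewrite big1 // => S2 _; rewrite ffunE S1n0 mulr0 mul0r if_same.
Qed.

Lemma super_mulr1 a : super_mul a (super_one B m) = a.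
Proof.
apply/ffunP => S; rewrite super_mulE (bigD1 S) //= [X in _ + X]big1 ?addr0 => [|S1 S1nS].
  rewrite (bigD1 set0) //= [X in _ + X]big1 ?addr0 => [|S2 /negbTE S2n0]; last first.
    by rewrite ffunE S2n0 mulr0 if_same.
  by rewrite -setI_eq0 setI0 setU0 !eqxx inversions0r ffunE eqxx mulr1 mul1r.
apply: big1 => S2 _; rewrite ffunE.
case: (S2 =P set0) => [->|_]; last by rewrite mulr0 if_same.
by rewrite setU0 (negbTE S1nS) andbF.
Qed.

Lemma super_mulDl a b c :
  super_mul (super_add a b) c = super_add (super_mul a c) (super_mul b c).
Proof.
apply/ffunP => S; rewrite [RHS]ffunE !super_mulE -big_split; apply: eq_bigr => S1 _.
rewrite -big_split; apply: eq_bigr => S2 _ /=.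
by case: ifP; rewrite ?addr0 // ffunE mulrDr mulrDl.
Qed.

Lemma super_mulDr a b c :
  super_mul a (super_add b c) = super_add (super_mul a b) (super_mul a c).
Proof.
apply/ffunP => S; rewrite [RHS]ffunE !super_mulE -big_split; apply: eq_bigr => S1 _.
rewrite -big_split; apply: eq_bigr => S2 _ /=.
by case: ifP; rewrite ?addr0 // ffunE mulrDr.
Qed.
End GrassmannRing.

HB.instance Definition _ (B : comPzRingType) (m : nat) :=
  GRing.Zmodule.on (superring B m).

HB.instance Definition _ (B : comPzRingType) (m : nat) :=
  GRing.Zmodule_isPzRing.Build (superring B m)
    (fun a b c => esym (super_mulA a b c)) (@super_mul1r B m) (@super_mulr1 B m)
    (@super_mulDl B m) (@super_mulDr B m).

Section GrassmannEven.
Variables (B : comPzRingType) (m : nat).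
Local Notation L := (superring B m).
Implicit Types a b : L.

Lemma super_mulrE a b : a * b = super_mul a b. Proof. by []. Qed.

Lemma super_expE a e : super_exp a e = a ^+ e.
Proof. by elim: e => [|e IHe]; rewrite ?expr0 // exprS -IHe. Qed.

Lemma super_sumE k (F : 'I_k -> L) : super_sum F = \sum_i F i.
Proof.
apply/ffunP => S; rewrite ffunE.
by elim/big_rec2: _ => [|i x y _ ->]; rewrite ffunE.
Qed.

Lemma super_even1 : super_even (1 : L).
Proof. by move=> S; rewrite ffunE; case: eqP => // ->; rewrite cards0. Qed.

Lemma cards_disjointU (T : finType) (A C : {set T}) :
  [disjoint A & C] -> #|A :|: C| = (#|A| + #|C|)%N.
Proof. by move=> dAC; rewrite cardsU (disjoint_setI0 dAC) cards0 subn0. Qed.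

Lemma super_evenM a b : super_even a -> super_even b -> super_even (a * b).
Proof.
move=> ea eb S oddS; rewrite super_mulrE super_mulE.
apply: big1 => S1 _; apply: big1 => S2 _; case: ifP => // /andP[d12 /eqP S12].
move: oddS; rewrite -S12 cards_disjointU // oddD.
by case: (boolP (odd #|S1|)) => [/ea -> | _ /eb ->]; rewrite ?mulr0 ?mul0r.
Qed.

Lemma super_evenX a e : super_even a -> super_even (a ^+ e).
Proof.
move=> ea; elim: e => [|e IHe]; first by rewrite expr0; apply: super_even1.
by rewrite exprS; apply: super_evenM.
Qed.

Lemma sign_inversionsC (X Y : {set 'I_m}) : [disjoint X & Y] -> ~~ odd #|X| ->
  (-1) ^+ inversions X Y = (-1) ^+ inversions Y X :> B.
Proof.
move=> dXY evenX; rewrite -signr_odd -[RHS]signr_odd; congr (_ ^+ _).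
have := congr1 odd (inversionsC dXY); rewrite oddD oddM (negbTE evenX).
by case: (odd (inversions X Y)); case: (odd (inversions Y X)).
Qed.

Lemma super_even_comm a b : super_even a -> GRing.comm a b.
Proof.
move=> ea; apply/ffunP => S; rewrite !super_mulrE !super_mulE [RHS]exchange_big.
apply: eq_bigr => X _; apply: eq_bigr => Y _.
rewrite disjoint_sym setUC; case: ifP => // /andP[dYX _].
have [/ea ->|evenX] := boolP (odd #|X|); first by rewrite !(mulr0, mul0r).
by rewrite sign_inversionsC 1?disjoint_sym // mulrAC -!mulrA [b Y * _]mulrC.
Qed.

Lemma body_is_zmod_morphism : zmod_morphism (@body B m).
Proof. by move=> a b; rewrite /body !ffunE. Qed.

Lemma body_is_monoid_morphism : monoid_morphism (@body B m).
Proof.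
split; first by rewrite /body ffunE eqxx.
move=> a b; rewrite /body super_mulrE super_mulE.
rewrite (bigD1 set0) //= [X in _ + X]big1 ?addr0 => [|S1 /negbTE S1n0]; last first.
  by apply: big1 => S2 _; rewrite setU_eq0 S1n0 andbF.
rewrite (bigD1 set0) //= [X in _ + X]big1 ?addr0 => [|S2 /negbTE S2n0]; last first.
  by rewrite set0U S2n0 andbF.
by rewrite -setI_eq0 set0I setU0 eqxx inversions0l mul1r.
Qed.
End GrassmannEven.

HB.instance Definition _ (B : comPzRingType) (m : nat) :=
  GRing.isZmodMorphism.Build _ _ (@body B m) (@body_is_zmod_morphism B m).
HB.instance Definition _ (B : comPzRingType) (m : nat) :=
  GRing.isMonoidMorphism.Build _ _ (@body B m) (@body_is_monoid_morphism B m).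

Section UnitLeftIdeal.
Variables (R : pzRingType) (k : nat).
Implicit Types s : 'I_k -> R.

Definition unit_lideal s : Prop := exists c : 'I_k -> R, \sum_i c i * s i = 1.

Definition central_family s : Prop := forall i x, GRing.comm (s i) x.

Lemma eq_unit_lideal s1 s2 : s1 =1 s2 -> unit_lideal s1 -> unit_lideal s2.
Proof.
by move=> eq_s [c c_s1]; exists c; rewrite -c_s1; apply: eq_bigr => i; rewrite eq_s.
Qed.

Lemma central_familyX s (n : 'I_k -> nat) :
  central_family s -> central_family (fun i => s i ^+ n i).
Proof. by move=> cs i x; apply/commr_sym/commrX/commr_sym. Qed.

Lemma unit_lidealX1 s j e : central_family s -> unit_lideal s ->
  unit_lideal (fun i => s i ^+ (if i == j then e else 1)).
Proof.
(* With x := c_j s_j, 1 - x lies in the ideal of the other generators and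
   divides 1 - x^e, while x^e = c_j^e s_j^e. *)
move=> cs [c c_s]; set x := c j * s j; set q := \sum_(l < e) x ^+ l.
exists (fun i => if i == j then c j ^+ e else c i * q).
have rest_s : \sum_(i | i != j) c i * s i = 1 - x.
  by rewrite -c_s [in RHS](bigD1 j) //= addrC addrK.
have xe : x ^+ e = c j ^+ e * s j ^+ e by apply/exprMn_comm/commr_sym.
rewrite (bigD1 j) //= !eqxx -xe.
transitivity ((1 - x) * q + x ^+ e); last first.
  by rewrite -opprB mulNr -subrX1 opprB subrK.
rewrite addrC -rest_s mulr_suml; congr (_ + _); apply: eq_bigr => i /negbTE ->.
by rewrite expr1 -!mulrA (cs i q).
Qed.

Lemma unit_lidealX s e : central_family s -> unit_lideal s ->
  unit_lideal (fun i => s i ^+ e).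
Proof.
move=> cs us.
suff /(_ (enum 'I_k)) : forall t : seq 'I_k,
    unit_lideal (fun i => s i ^+ (if i \in t then e else 1)).
  by apply: eq_unit_lideal => i; rewrite mem_enum.
elim=> [|j t IHt]; first by apply: eq_unit_lideal us => i; rewrite expr1.
have [jt|jNt] := boolP (j \in t).
  by apply: eq_unit_lideal IHt => i; rewrite in_cons; case: eqP => // ->; rewrite jt.
have := unit_lidealX1 j e (central_familyX _ cs) IHt.
apply: eq_unit_lideal => i; rewrite in_cons -exprM.
by case: eqP => [->|_]; rewrite ?(negbTE jNt) ?mul1n ?muln1.
Qed.
End UnitLeftIdeal.

Section FrobeniusModP.
Variables (p : nat) (B : comPzRingType).
Hypothesis p_prime : prime p.
Local Notation pB := (in_pB p (B := B)).

Lemma in_pB0 : pB 0.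
Proof. by exists 0; rewrite mulr0. Qed.

Lemma in_pBD x y : pB x -> pB y -> pB (x + y).
Proof. by move=> [x' ->] [y' ->]; exists (x' + y'); rewrite mulrDr. Qed.

Lemma in_pBN x : pB x -> pB (- x).
Proof. by move=> [x' ->]; exists (- x'); rewrite mulrN. Qed.

Lemma in_pBMl x y : pB y -> pB (x * y).
Proof. by move=> [y' ->]; exists (x * y'); rewrite mulrCA. Qed.

Lemma in_pB_sum I (r : seq I) (P : pred I) (F : I -> B) :
  (forall i, P i -> pB (F i)) -> pB (\sum_(i <- r | P i) F i).
Proof. by move=> pBF; elim/big_ind: _ => //; [apply: in_pB0 | apply: in_pBD]. Qed.

Lemma in_pBX x : pB x -> pB (x ^+ p).
Proof.
by move=> px; rewrite -[p in x ^+ p](prednK (prime_gt0 p_prime)) exprSr; apply: in_pBMl.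
Qed.

Lemma frobeniusD_mod x y : pB ((x + y) ^+ p - (x ^+ p + y ^+ p)).
Proof.
pose F i := x ^+ (p - i) * y ^+ i *+ 'C(p, i).
have p_gt0 := prime_gt0 p_prime.
rewrite exprDn big_ord_recr /= -(big_mkord xpredT F) big_ltn //.
rewrite /F subn0 subnn !expr0 bin0 binn mulr1 mul1r !mulr1n -addrA addrCA addrK.
rewrite big_nat_cond; apply: in_pB_sum => i /andP[/andP[i_gt0 i_ltp] _].
have /dvdnP[c ->] : (p %| 'C(p, i))%N by apply: prime_dvd_bin => //; apply/andP.
by exists (x ^+ (p - i) * y ^+ i *+ c); rewrite mulrnA mulr_natl.
Qed.

Lemma frobenius_sum_mod I (r : seq I) (F : I -> B) :
  pB ((\sum_(i <- r) F i) ^+ p - \sum_(i <- r) F i ^+ p).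
Proof.
elim: r => [|a r IHr].
  by rewrite !big_nil expr0n gtn_eqF ?prime_gt0 // subrr; apply: in_pB0.
rewrite !big_cons; set s := \sum_(i <- r) F i; set t := \sum_(i <- r) F i ^+ p.
have -> : (F a + s) ^+ p - (F a ^+ p + t) =
          ((F a + s) ^+ p - (F a ^+ p + s ^+ p)) + (s ^+ p - t) by ring.
exact: in_pBD (frobeniusD_mod _ _) IHr.
Qed.

Lemma fermat_mod (c : nat) : pB ((c%:R : B) ^+ p - c%:R).
Proof.
have c_le : (c <= c ^ p)%N.
  by case: c => // c; rewrite -{1}(expn1 c.+1); apply: leq_pexp2l => //; apply: prime_gt0.
have /dvdnP[k p_k] : (p %| c ^ p - c)%N by rewrite -eqn_mod_dvd // fermat_little.
by exists k%:R; rewrite -natrX -natrB // p_k natrM mulrC.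
Qed.

Lemma evalFp_frobenius_mod n (f : {mpoly 'F_p[n]}) (x : 'I_n -> B) :
  pB (evalFp f (fun i => x i ^+ p) - evalFp f x ^+ p).
Proof.
rewrite /evalFp; set P := fun mo : 'X_{1.. n} => \prod_(i < n) x i ^+ mo i.
set c := fun mo : 'X_{1.. n} => ((f@_mo : nat)%:R : B).
have -> : \sum_(mo <- msupp f) c mo * \prod_(i < n) x i ^+ p ^+ mo i =
          \sum_(mo <- msupp f) c mo * P mo ^+ p.
  by apply: eq_bigr => mo _; rewrite -prodrXl; under eq_bigr do rewrite exprAC.
have -> : \sum_(mo <- msupp f) c mo * P mo ^+ p - (\sum_(mo <- msupp f) c mo * P mo) ^+ p
  = - (\sum_(mo <- msupp f) (c mo ^+ p - c mo) * P mo ^+ p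
    + ((\sum_(mo <- msupp f) c mo * P mo) ^+ p
       - \sum_(mo <- msupp f) (c mo * P mo) ^+ p)).
  under [in RHS]eq_bigr do rewrite mulrBl.
  under [X in _ = - (_ + (_ - X))]eq_bigr do rewrite exprMn.
  rewrite sumrB; ring.
apply/in_pBN/in_pBD; last exact: frobenius_sum_mod.
by apply: in_pB_sum => mo _; rewrite mulrC; apply/in_pBMl/fermat_mod.
Qed.

Lemma in_pB_evalFp_frobenius n (f : {mpoly 'F_p[n]}) (x : 'I_n -> B) :
  pB (evalFp f x) -> pB (evalFp f (fun i => x i ^+ p)).
Proof.
by move=> fx; have := in_pBD (evalFp_frobenius_mod f x) (in_pBX fx); rewrite subrK.
Qed.
End FrobeniusModP.

Section FrobeniusLift.
Variables (p : nat) (B : comPzRingType) (m n : nat).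
Implicit Types (r : 'I_n.+1 -> superring B m) (u : superring B m).

Lemma FrE r i : Fr p r i = r i ^+ p.
Proof. exact: super_expE. Qed.

Lemma unimodularE r :
  unimodular r <-> (forall i, super_even (r i)) /\ unit_lideal r.
Proof.
rewrite /unimodular /unit_lideal.
by split=> -[r_even [a ar1]]; split=> //; exists a; rewrite ?super_sumE in ar1 *.
Qed.

Lemma Fr_unimodular r : unimodular r -> unimodular (Fr p r).
Proof.
move=> /unimodularE[r_even r_unit]; apply/unimodularE; split => [i|].
  by rewrite FrE; apply: super_evenX.
have r_central : central_family r by move=> i x; apply: super_even_comm.
by apply: eq_unit_lideal (unit_lidealX p r_central r_unit) => i; rewrite FrE.
Qed.

Lemma even_unitX u e : even_unit u -> even_unit (u ^+ e).
Proof.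
move=> [u_even [v [v_even uv1]]]; split; first exact: super_evenX.
exists (v ^+ e); split; first exact: super_evenX.
by rewrite -super_mulrE -exprMn_comm ?super_mulrE ?uv1 ?expr1n //; apply: super_even_comm.
Qed.

Lemma Fr_scale r u : super_even u ->
  Fr p (fun i => u * r i) = (fun i => u ^+ p * Fr p r i).
Proof.
move=> u_even; apply: functional_extensionality => i.
by rewrite !FrE exprMn_comm //; apply: super_even_comm.
Qed.

Lemma Fr_in_Wtilde (fs : seq {mpoly 'F_p[n.+1]}) r :
  prime p -> in_Wtilde fs r -> in_Wtilde fs (Fr p r).
Proof.
move=> p_prime [r_unimod r_W]; split; first exact: Fr_unimodular.
have -> : (fun i => body (Fr p r i)) = (fun i => body (r i) ^+ p).
  by apply: functional_extensionality => i; rewrite FrE rmorphXn.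
by move=> f /r_W; apply: in_pB_evalFp_frobenius.
Qed.
End FrobeniusLift.

Theorem mainTheorem16 (p : nat) (p_prime : prime p) (p_odd : odd p)
    (n : nat) (fs : seq {mpoly 'F_p[n.+1]}) (fs_homog : homogeneous_system fs)
    (B : comPzRingType)
    (B_fg : finitely_generated_ring B) (B_pnil : p_nilpotent p B)
    (B_red : mod_p_reduced p B) (m : nat) :
  (* Fr is a well-defined endomorphism of P^n(Lambda_B) ... *)
  (forall r : 'I_n.+1 -> superring B m, unimodular r -> unimodular (Fr p r)) /\
  (forall (r : 'I_n.+1 -> superring B m) (u : superring B m), even_unit u ->
     exists v : superring B m, even_unit v /\
       Fr p (fun i => super_mul u (r i)) = (fun i => super_mul v (Fr p r i))) /\
  (* ... which restricts to an endomorphism of Wtilde = P^n|_W *)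
  (forall r : 'I_n.+1 -> superring B m,
     in_Wtilde fs r -> in_Wtilde fs (Fr p r)).
Proof.
split; first exact: Fr_unimodular.
split; last by move=> r; apply: Fr_in_Wtilde.
move=> r u u_unit; exists (u ^+ p); split; first exact: even_unitX.
exact: Fr_scale (proj1 u_unit).
Qed.
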